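(* Assume $\alpha\neq0$ and $w=\tfrac12(s+t)\notin\mathbb{Z}$. Then for every positive integer $n$, every $u\in\mathbb{C}$ and all $a,c\in\mathbb{Z}$, each of the two sets $$\{\psi^{(n)}(u)^a_b\}_{b\in\{a-n+2j:\,j=0,1,\dots,n\}},\qquad\{\psi^{(n)}(u)^b_c\}_{b\in\{c-n+2j:\,j=0,1,\dots,n\}}$$ is a linearly independent subset of $(\mathbb{C}^2)^{\otimes n}$.
   Context: Fix $\alpha,s,t\in\mathbb{C}$. $\mathbb{C}^2$ has basis $e_1,e_2$; vectors are columns of coordinates. For integers $l$ define $\psi^{(1)}(u)^l_{l+1}=\begin{pmatrix}1\\ \alpha(u-l-t)\end{pmatrix}$, $\psi^{(1)}(u)^l_{l-1}=\begin{pmatrix}1\\ \alpha(u+l+s)\end{pmatrix}$, $\psi^{(1)}(u)^a_b=0$ if $|a-b|\neq1$. $\Pi_{1\ldots n}$ is the symmetrizer on $(\mathbb{C}^2)^{\otimes n}$, $\Pi_{1\ldots n}e_{i_1}\otimes\cdots\otimes e_{i_n}=\frac1{n!}\sum_{\sigma\in S_n}e_{i_{\sigma(1)}}\otimes\cdots\otimes e_{i_{\sigma(n)}}$. For $a,b\in\mathbb{Z}$ the fused intertwining vector is $\psi^{(n)}(u)^a_b=\Pi_{1\ldots n}\,\psi^{(1)}(u+n-1)^{c_0}_{c_1}\otimes\cdots\otimes\psi^{(1)}(u+1)^{c_{n-2}}_{c_{n-1}}\otimes\psi^{(1)}(u)^{c_{n-1}}_{c_n}$, with $c_0=a$, $c_n=b$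 and any integers $c_1,\dots,c_{n-1}$ with $|c_{i+1}-c_i|=1$ (the result does not depend on this choice); it is $0$ if $b-a\notin\{-n,-n+2,\dots,n\}$. *)

(* complex numbers C = R[i] over an arbitrary realType R
   (real_closed's [complex R]); with R = Stdlib's reals this is literally C. *)
From mathcomp Require Import all_boot all_algebra all_fingroup complex reals.

Set Implicit Arguments.
Unset Strict Implicit.
Unset Printing Implicit Defensive.

Import GRing.Theory.
Local Open Scope ring_scope.

Section Fused.
Variable R : realType.
Local Notation C := (R[i]).

(* A vector of C^2 in coordinates w.r.t. (e_1, e_2) : index 0 <-> e_1, 1 <-> e_2. *)
Definition vec2 := 'I_2 -> C.

(* An element of (C^2)^{\otimes n} in coordinates w.r.t. the basis
   e_{i_1} (x) ... (x) e_{i_n}, the multi-index being idx : {ffun 'I_n -> 'I_2}. *)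
Definition tensor (n : nat) := {ffun 'I_n -> 'I_2} -> C.

Definition pure_tensor (n : nat) (v : 'I_n -> vec2) : tensor n :=
  fun idx => \prod_(k < n) v k (idx k).

(* The symmetrizer Pi_{1..n}: on basis vectors
   e_{i_1}(x)..(x)e_{i_n} |-> 1/n! sum_sigma e_{i_sigma(1)}(x)..(x)e_{i_sigma(n)},
   extended linearly; in coordinates (Pi T)(j) = 1/n! sum_sigma T(j o sigma). *)
Definition symmetrizer (n : nat) (T : tensor n) : tensor n :=
  fun idx => (n`!%:R)^-1 * \sum_(sigma : 'S_n) T [ffun k => idx (sigma k)].

Definition psi1 (alpha s t u : C) (a b : int) : vec2 :=
  fun i =>
    if b == a + 1 then (if i == ord0 then 1 else alpha * (u - a%:~R - t))
    else if b == a - 1 then (if i == ord0 then 1 else alpha * (u + a%:~R + s))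
    else 0.

Definition admissible (n : nat) (a b : int) : bool :=
  [exists j : 'I_n.+1, b == a - n%:Z + 2 * (j : nat)%:Z].

(* A canonical admissible path c_0 = a, ..., c_n = b with |c_{k+1}-c_k| = 1:
   first m := (b - a + n)/2 up-steps, then n - m down-steps. *)
Definition fpath (n : nat) (a b : int) (k : nat) : int :=
  let m := (absz (b - a + n%:Z))./2 in
  if (k <= m)%N then a + k%:Z else a + (2 * m)%:Z - k%:Z.

(* psi^{(n)}(u)^a_b
   = Pi (psi1(u+n-1)^{c_0}_{c_1} (x) ... (x) psi1(u)^{c_{n-1}}_{c_n}),
   and 0 if b - a is not in {-n, -n+2, ..., n}. *)
Definition psin (alpha s t : C) (n : nat) (u : C) (a b : int) : tensor n :=
  if admissible n a b then
    symmetrizer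
      (pure_tensor (fun k : 'I_n =>
         psi1 alpha s t (u + (n.-1 - k)%:R) (fpath n a b k) (fpath n a b k.+1)))
  else fun _ => 0.

Definition lin_indep (n m : nat) (v : 'I_m -> tensor n) : Prop :=
  forall lam : 'I_m -> C,
    (forall idx, \sum_(j < m) lam j * v j idx = 0) -> forall j, lam j = 0.

End Fused.

Arguments psin {R} alpha s t n u a b _.

From Pilot Require Import Defs.
From mathcomp Require Import all_boot all_algebra all_fingroup complex reals.
From mathcomp Require Import zify ring.
Import GRing.Theory Num.Theory.
Local Open Scope ring_scope.

(* Let (eps_1, eps_2) be the dual basis of (e_1, e_2) and pair a tensor T of
   (C^2)^{(x)n} with the symmetric covector (x eps_1 + eps_2)^{(x)n};
   the result ev_tensor x T is a polynomial function of x.  This pairing is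
   invariant under the symmetrizer and sends a pure tensor v_0 (x) ... (x) v_{n-1}
   to the product of the pairings of the v_k, so ev_tensor x psi^(n)(u)^a_b is a
   product of n linear factors x + alpha*(...), one per step of the path from a
   to b.  For b = a - n + 2j (resp. a = c - n + 2j) the j-th product has the shape
     prod_{i<j} (x + f i) * prod_{i<n-j} (x + g i)
   with f, g independent of j; the hypothesis (s+t)/2 \notin Z makes every f i
   differ from every g i', and alpha != 0 makes g injective.  Such a family of
   polynomials is linearly independent (evaluate at x = -g k, by induction on k),
   and a vanishing linear combination of tensors gives a vanishing combination
   of their pairings, whence the theorem. *)

(* Evaluating at x = -g k
   kills every member with j < n - k and leaves a nonzero value at j = n - k. *)
Lemma split_products_lin_indep (K : idomainType) (n : nat) (f g : nat -> K)
    (lam : 'I_n.+1 -> K) :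
  (forall i i', f i != g i') -> injective g ->
  (forall x, \sum_(j < n.+1) lam j *
      (\prod_(0 <= i < j) (x + f i) * \prod_(0 <= i < n - j) (x + g i)) = 0) ->
  forall j, lam j = 0.
Proof.
move=> fg_neq g_inj vanish.
suff lam0 k (j : 'I_n.+1) : (n < j + k)%N -> lam j = 0.
  by move=> j; apply: (lam0 n.+1); lia.
elim: k j => [|k IHk] j ltn_jk; first by have := ltn_ord j; lia.
have [|le_jk] := ltnP n (j + k); first exact: IHk.
have ejk : (n - j = k)%N by have := ltn_ord j; lia.
have others0 (j' : 'I_n.+1) : j' != j -> lam j' *
    (\prod_(0 <= i < j') (- g k + f i) * \prod_(0 <= i < n - j') (- g k + g i)) = 0.
  move=> neq_j'j; have [lt_jj'|le_j'j] := ltnP j j'.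
    by rewrite IHk ?mul0r //; lia.
  have lt_k : (k < n - j')%N by move: neq_j'j; rewrite -val_eqE /=; lia.
  rewrite [X in _ * (_ * X)](big_cat_nat (n := k)) ?(ltnW lt_k) //= (big_ltn lt_k) addNr.
  by rewrite !(mul0r, mulr0).
have /eqP := vanish (- g k).
rewrite (bigD1 j) //= [X in _ + X]big1 ?addr0; last exact: others0.
rewrite !mulf_eq0 ejk => /or3P[/eqP // | |]; rewrite prodf_seq_eq0 /=; case/hasP => i.
  by rewrite mem_index_iota addrC subr_eq0 => _ /eqP eq_fg; case/eqP: (fg_neq i k).
rewrite mem_index_iota addrC subr_eq0 => /andP[_ lt_ik] /eqP /g_inj eq_ik.
by rewrite eq_ik ltnn in lt_ik.
Qed.

Section Pairing.
Context {R : realType}.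
Local Notation C := (R[i]).

(* The covector x eps_1 + eps_2 on C^2, as the weight of a basis index. *)
Definition basis_weight (x : C) (i : 'I_2) : C := if i == ord0 then x else 1.

Definition ev_vec (x : C) (v : vec2 R) : C := v ord0 * x + v ord_max.

Definition ev_tensor {n : nat} (x : C) (T : tensor R n) : C :=
  \sum_(idx : {ffun 'I_n -> 'I_2}) T idx * \prod_(k < n) basis_weight x (idx k).

Lemma ev_tensor_lin_comb {n m : nat} {v : 'I_m -> tensor R n} {lam : 'I_m -> C}
    (x : C) :
  (forall idx, \sum_(j < m) lam j * v j idx = 0) ->
  \sum_(j < m) lam j * ev_tensor x (v j) = 0.
Proof.
move=> comb0; under eq_bigr do rewrite /ev_tensor mulr_sumr.
rewrite exchange_big /=; apply: big1 => idx _.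
under eq_bigr do rewrite mulrA.
by rewrite -mulr_suml comb0 mul0r.
Qed.

(* Permuting tensor factors does not change the pairing, the covector being
   a symmetric tensor. *)
Lemma ev_tensor_perm {n : nat} (x : C) (T : tensor R n) (sigma : 'S_n) :
  ev_tensor x (fun idx => T [ffun k => idx (sigma k)]) = ev_tensor x T.
Proof.
pose permute (idx : {ffun 'I_n -> 'I_2}) := [ffun k => idx ((sigma^-1)%g k)].
have permute_inj : injective permute.
  move=> i1 i2 /ffunP eq12; apply/ffunP => k.
  by move: (eq12 (sigma k)); rewrite !ffunE permK.
rewrite /ev_tensor (reindex_inj permute_inj); apply: eq_bigr => idx _.
have -> : [ffun k => permute idx (sigma k)] = idx.
  by apply/ffunP => k; rewrite !ffunE permK.
congr (_ * _); rewrite (reindex_inj (@perm_inj _ sigma)) /=.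
by apply: eq_bigr => k _; rewrite ffunE permK.
Qed.

Lemma ev_tensor_symmetrizer {n : nat} (x : C) (T : tensor R n) :
  ev_tensor x (symmetrizer T) = ev_tensor x T.
Proof.
have -> : ev_tensor x (symmetrizer T) = (n`!%:R)^-1 *
    \sum_(sigma : 'S_n) ev_tensor x (fun idx => T [ffun k => idx (sigma k)]).
  rewrite /ev_tensor /symmetrizer; under eq_bigr do rewrite -mulrA mulr_suml.
  by rewrite -mulr_sumr exchange_big.
under eq_bigr do rewrite ev_tensor_perm.
rewrite sumr_const card_Sn -[ev_tensor x T *+ _]mulr_natl mulrA mulVf ?mul1r //.
by rewrite pnatr_eq0 -lt0n fact_gt0.
Qed.

Lemma ev_tensor_pure {n : nat} (x : C) (v : 'I_n -> vec2 R) :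
  ev_tensor x (pure_tensor v) = \prod_(k < n) ev_vec x (v k).
Proof.
rewrite /ev_tensor /pure_tensor.
under eq_bigr do rewrite -big_split /=.
rewrite -(bigA_distr_bigA (fun k i => v k i * basis_weight x i)) /=.
apply: eq_bigr => k _; rewrite big_ord_recr big_ord1 /basis_weight /= mulr1.
by congr (v k _ * x + _); apply: val_inj.
Qed.

End Pairing.

Section FusedVectors.
Variable R : realType.
Local Notation C := (R[i]).
Variables (alpha s t : C).

Lemma ev_psi1_up (u x : C) (a : int) :
  ev_vec x (psi1 alpha s t u a (a + 1)) = x + alpha * (u - a%:~R - t).
Proof. by rewrite /ev_vec /psi1 eqxx /= mul1r. Qed.

Lemma ev_psi1_down (u x : C) (a : int) :
  ev_vec x (psi1 alpha s t u a (a - 1)) = x + alpha * (u + a%:~R + s).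
Proof.
have down_neq_up : (a - 1 == a + 1) = false by apply/negbTE; lia.
by rewrite /ev_vec /psi1 down_neq_up eqxx /= mul1r.
Qed.

Lemma fpath_up (n m k : nat) (a : int) : (m <= n)%N -> (k <= m)%N ->
  Defs.fpath n a (a - n%:Z + 2 * m%:Z) k = a + k%:Z.
Proof.
move=> le_mn le_km; rewrite /Defs.fpath.
have -> : (absz (a - n%:Z + 2 * m%:Z - a + n%:Z))./2 = m by lia.
by rewrite le_km.
Qed.

Lemma fpath_down (n m k : nat) (a : int) : (m <= n)%N -> (m <= k)%N ->
  Defs.fpath n a (a - n%:Z + 2 * m%:Z) k = a + (2 * m)%:Z - k%:Z.
Proof.
move=> le_mn le_mk; rewrite /Defs.fpath.
have -> : (absz (a - n%:Z + 2 * m%:Z - a + n%:Z))./2 = m by lia.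
by case: ifP => //; lia.
Qed.

Lemma admissible_steps (n m : nat) (a : int) : (m <= n)%N ->
  admissible n a (a - n%:Z + 2 * m%:Z).
Proof.
move=> le_mn; have lt_m : (m < n.+1)%N by lia.
by apply/existsP; exists (Ordinal lt_m).
Qed.

Lemma ev_psin (n m : nat) (u x : C) (a : int) : (m <= n)%N ->
  ev_tensor x (psin alpha s t n u a (a - n%:Z + 2 * m%:Z)) =
  \prod_(0 <= k < m) (x + alpha * ((u + (n.-1 - k)%:R) - (a + k%:Z)%:~R - t)) *
  \prod_(0 <= i < n - m)
     (x + alpha * ((u + (n.-1 - (i + m))%:R) + (a + (2 * m)%:Z - (i + m)%:Z)%:~R + s)).
Proof.
move=> le_mn; rewrite /psin admissible_steps // ev_tensor_symmetrizer.
rewrite ev_tensor_pure -(big_mkord xpredT (fun k => ev_vec x (psi1 alpha s t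
  (u + (n.-1 - k)%:R) (Defs.fpath n a _ k) (Defs.fpath n a _ k.+1)))).
rewrite (big_cat_nat (n := m)) //=; congr (_ * _).
  apply: eq_big_nat => k /andP[_ lt_km].
  rewrite !fpath_up // 1?ltnW // -addn1 PoszD addrA; exact: ev_psi1_up.
rewrite -{1}(add0n m) big_addn; apply: eq_big_nat => i /andP[_ lt_i].
rewrite !fpath_down ?leqW ?leq_addl //.
have -> : a + (2 * m)%:Z - (i + m).+1%:Z = a + (2 * m)%:Z - (i + m)%:Z - 1 by lia.
exact: ev_psi1_down.
Qed.

Hypothesis alpha_neq0 : alpha != 0.
Hypothesis w_notin_Z : forall z : int, (s + t) / 2 != z%:~R.

Lemma alpha_shift_neq (p q : C) (z : int) :
  q - p = s + t + 2 * z%:~R -> alpha * p != alpha * q.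
Proof.
move=> diff_qp; apply/negP => /eqP /(mulfI alpha_neq0) eq_pq.
move: diff_qp; rewrite eq_pq subrr => /eqP; rewrite eq_sym addr_eq0 => /eqP st2.
have /eqP := w_notin_Z (- z); apply.
by rewrite st2 intrN mulNr mulrC mulKf // pnatr_eq0.
Qed.

Lemma alpha_step_inj (p d : C) : d != 0 ->
  injective (fun i : nat => alpha * (p + d * i%:R)).
Proof.
move=> d_neq0 i m /(mulfI alpha_neq0) /addrI /(mulfI d_neq0) /eqP.
by rewrite eqr_nat => /eqP.
Qed.

Lemma psin_row_lin_indep (n : nat) (u : C) (a : int) :
  lin_indep (fun j : 'I_n.+1 => psin alpha s t n u a (a - n%:Z + 2 * (j : nat)%:Z)).
Proof.
move=> lam comb0.
pose f (k : nat) := alpha * (u + (n.-1)%:R - a%:~R - t + (- 2) * k%:R).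
pose g (i : nat) := alpha * (u + (n.-1)%:R + a%:~R + s + (- 2) * i%:R).
apply: (split_products_lin_indep _ n f g).
- move=> k i; apply: (alpha_shift_neq _ _ (a + k%:Z - i%:Z)).
  by rewrite !intrD !intrN; ring.
- by apply: alpha_step_inj; rewrite oppr_eq0 pnatr_eq0.
move=> x; rewrite -[RHS](ev_tensor_lin_comb x comb0); apply: eq_bigr => j _.
have le_jn : (j <= n)%N by have := ltn_ord j; lia.
rewrite ev_psin //; congr (_ * (_ * _)); apply: eq_big_nat => k /andP[_ lt_k].
  by rewrite /f natrB; [rewrite intrD; ring | lia].
by rewrite /g natrB; [rewrite intrB intrD; ring | lia].
Qed.

(* The family {psi^(n)(u)^b_c}_b with c fixed is linearly independent; here
   the j-th path makes n - j up-steps and j down-steps, read backwards. *)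
Lemma psin_column_lin_indep (n : nat) (u : C) (c : int) :
  lin_indep (fun j : 'I_n.+1 => psin alpha s t n u (c - n%:Z + 2 * (j : nat)%:Z) c).
Proof.
move=> lam comb0.
pose f (i : nat) := alpha * (u + c%:~R + s + 1 + 2 * i%:R).
pose g (i : nat) := alpha * (u + 1 - c%:~R - t + 2 * i%:R).
apply: (split_products_lin_indep _ n f g).
- move=> i k; rewrite eq_sym; apply: (alpha_shift_neq _ _ (c + i%:Z - k%:Z)).
  by rewrite !intrD !intrN; ring.
- by apply: alpha_step_inj; rewrite pnatr_eq0.
move=> x; rewrite -[RHS](ev_tensor_lin_comb x comb0); apply: eq_bigr => j _.
have le_jn : (j <= n)%N by have := ltn_ord j; lia.
have c_steps : c = c - n%:Z + 2 * (j : nat)%:Z - n%:Z + 2 * (n - j)%N%:Z by lia.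
rewrite [X in ev_tensor _ (psin _ _ _ _ _ _ X)]c_steps.
rewrite ev_psin ?leq_subr // [X in _ = _ * X]mulrC.
have -> : (n - (n - j) = j)%N by lia.
congr (_ * (_ * _)).
  rewrite big_nat_rev; apply: eq_big_nat => i /andP[_ lt_ij].
  rewrite /f add0n.
  have -> : (n.-1 - (i + (n - j)) = j - i.+1)%N by lia.
  have -> : c - n%:Z + 2 * (j : nat)%:Z + (2 * (n - j))%N%:Z - (i + (n - j))%N%:Z
      = c + (j : nat)%:Z - i%:Z by lia.
  by rewrite natrB // intrB intrD; ring.
rewrite [RHS]big_nat_rev; apply: eq_big_nat => i /andP[_ lt_i].
rewrite /g add0n.
have -> : (n.-1 - (n - j - i.+1) = j + i)%N by lia.
have -> : c - n%:Z + 2 * (j : nat)%:Z + (n - j - i.+1)%N%:Z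
    = c + (j : nat)%:Z - i%:Z - 1 by lia.
by rewrite natrD !intrB intrD; ring.
Qed.

End FusedVectors.

Theorem proposition6 (R : realType) (alpha s t : R[i]) :
  alpha != 0 ->
  (forall z : int, (s + t) / 2 != z%:~R) ->
  forall (n : nat), (0 < n)%N ->
  forall (u : R[i]) (a c : int),
    lin_indep (fun j : 'I_n.+1 => psin alpha s t n u a (a - n%:Z + 2 * (j : nat)%:Z))
    /\ lin_indep (fun j : 'I_n.+1 => psin alpha s t n u (c - n%:Z + 2 * (j : nat)%:Z) c).
Proof.
move=> alpha_neq0 w_notin_Z n _ u a c; split.
- exact: psin_row_lin_indep.
- exact: psin_column_lin_indep.
Qed.
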